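(* In the general setting of the context, let $(x_1^*,\dots,x_n^* )$ be an optimal solution attaining $P^*$ together with a vector $y^*\in\mathbb{R}^m_+$ such that $y^*_i=0$ whenever $(\sum_tA_tx^*_t)_i<b_i$ and $A_t^\top y^*$ is a supergradient of $f_t$ at $x_t^*$ for every $t$. For $i\in[m]$ and $t\in[n]$ let $$R_t^i=\frac{1}{n-t+1}\sum_{s=t}^n(A_{\sigma(s)}x^*_{\sigma(s)})_i-\frac{b_i}{n}.$$ Then $$\mathbb{P}\Big(\exists\,t\in[n(1-\epsilon)],\ \exists\,i\in[m]:\ R_t^i>\frac{b_i}{n}2^{-\kappa(t)/2}\epsilon^{1/2}\Big)\le mL\exp\Big(-\frac{\epsilon^2}{6\gamma}\Big).$$
   Context: General setting. Let $m,k,n$ be positive integers and $b\in\mathbb{R}^m_{++}$. Let $\mathcal G$ be the set of proper, concave, upper semicontinuous functions $f:\mathbb{R}^k\to[-\infty,\infty)$ with bounded superlevel sets such that $\mathrm{dom} f\subset\mathbb{R}^k_+$ and $f(0)=0$. Let $f_1,\dots,f_n\in\mathcal G$ and $A_1,\dots,A_n\in\mathbb{R}_+^{m\times k}$. Let $P^*=\sup\{\sum_{t=1}^n f_t(x_t): x_t\in\mathbb{R}^k,\ \sum_{t=1}^n A_tx_t\le b\}$ and assume $P^*>0$. Let $\gamma>0$ satisfy, for every $t\in[n]$: $(A_tx)_i/b_i\le\gamma$ for all $i\in[m]$ and all $x$ with $f_t(x)\ge0$, and $f_t(x)\le\gamma P^*$ for all $x\in\mathrm{dom} f_t$. Let $\epsilon\in(0,1)$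 be such that $L=\log_2(1/\epsilon)$ and $n\epsilon$ are integers. Let $\sigma$ be a uniformly random permutation of $[n]$; probabilities are over $\sigma$. For $t\in[n(1-\epsilon)]$, $\kappa(t)=\lfloor\log_2\frac{n-t}{n\epsilon}\rfloor+1$, i.e. $\kappa(t)=k\in[L]$ iff $n(1-2^k\epsilon)<t\le n(1-2^{k-1}\epsilon)$. *)

From HB Require Import structures.
From Stdlib Require Import Reals.
From mathcomp Require Import all_boot.
From mathcomp Require Import fingroup perm.
Local Open Scope R_scope.

Set Implicit Arguments.
Unset Strict Implicit.
Unset Printing Implicit Defensive.

HB.instance Definition _ :=
  Monoid.isComLaw.Build R 0 Rplus (fun a b c => esym (Rplus_assoc a b c)) Rplus_comm Rplus_0_l.

Definition vec (k : nat) := 'I_k -> R.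

Definition mxv (m k : nat) (A : 'I_m -> 'I_k -> R) (x : vec k) : vec m :=
  fun i => \big[Rplus/0]_(j < k) (A i j * x j).

(* extended-real valued functions R^k -> [-oo, oo): None encodes -oo *)
Definition efun (k : nat) := vec k -> option R.

Definition elt (a : option R) (c : R) : Prop :=
  match a with Some v => (v < c) | None => True end.

Definition proper_e (k : nat) (f : efun k) : Prop := exists x, f x <> None.

Definition concave_e (k : nat) (f : efun k) : Prop :=
  forall (x y : vec k) (v w lam : R), (0 <= lam <= 1) ->
    f x = Some v -> f y = Some w ->
    exists u, f (fun j => lam * x j + (1 - lam) * y j) = Some u /\
              (lam * v + (1 - lam) * w <= u).

Definition usc_e (k : nat) (f : efun k) : Prop :=
  forall (x : vec k) (c : R), elt (f x) c ->
    exists delta, (0 < delta) /\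
      forall y : vec k, (forall j, Rabs (y j - x j) < delta) -> elt (f y) c.

Definition bounded_superlevel_e (k : nat) (f : efun k) : Prop :=
  forall c : R, exists M : R, forall (x : vec k) (v : R),
    f x = Some v -> (c <= v) -> forall j, (Rabs (x j) <= M).

Definition in_G (k : nat) (f : efun k) : Prop :=
  proper_e f /\ concave_e f /\ usc_e f /\ bounded_superlevel_e f /\
  (forall x, f x <> None -> forall j, 0 <= x j) /\
  f (fun _ => 0) = Some 0.

Definition kappa (n t : nat) (eps : R) : Z :=
  (Int_part (ln ((INR n - INR t) / (INR n * eps)) / ln 2) + 1)%Z.

(* R_t^i for a permutation sigma of [n] (0-based 'I_n; t is 1-based) *)
Definition Rti (n m k : nat) (A : 'I_n -> 'I_m -> 'I_k -> R) (xs : 'I_n -> vec k)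
  (b : vec m) (sigma : 'S_n) (t : nat) (i : 'I_m) : R :=
  (/ (INR n - INR t + 1) *
     \big[Rplus/0]_(s < n | (t <= s.+1)%N) mxv (A (sigma s)) (xs (sigma s)) i
   - b i / INR n).

Definition Rltb (a c : R) : bool := if Rlt_dec a c then true else false.

(* the bad event: exists t in [n(1-eps)] = {1,..,n - N} (N = n eps), exists i *)
Definition bad_event (n m k N : nat) (A : 'I_n -> 'I_m -> 'I_k -> R)
  (xs : 'I_n -> vec k) (b : vec m) (eps : R) (sigma : 'S_n) : bool :=
  [exists t : 'I_n, ((t.+1 <= n - N)%N &&
     [exists i : 'I_m,
        Rltb (b i / INR n * Rpower 2 (- IZR (kappa n t.+1 eps) / 2) * sqrt eps)
             (Rti A xs b sigma t.+1 i)])].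

Definition prob_perm (n : nat) (E : 'S_n -> bool) : R :=
  (INR #|[set s : 'S_n | E s]| / INR #|[set: 'S_n]|).

(* Fix a resource i and a dyadic scale j < L.  Along the random order, the loads
   (A_t x^*_t)_i not yet revealed form a sample without replacement with values in
   [0, gamma b_i] and mean at most b_i / n (by feasibility).  Revealing the
   permutation one position at a time, the potential
     #(completions) * exp (- th (x - mean of the unrevealed loads) + th^2 c x / 2 * sum 1/(r-1)^2)
   is a supermartingale (Hoeffding's lemma applied to the next revealed load), and it
   dominates the number of completions once the mean has crossed x.  Hence the orders
   whose unrevealed mean exceeds x before N 2^j loads remain number at most
   n! exp (- th (x - b_i/n) + th^2 c x / (2 N 2^j)).  For x = b_i/n (1 + 2^(-(j+1)/2) sqrt eps)
   and the best th this is n! exp (- eps^2 / (6 gamma)); a violation at time t lies at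
   scale j = kappa(t) - 1, and a union bound over the m L pairs (i, j) concludes. *)

From HB Require Import structures.
From Stdlib Require Import Reals Lra.
From mathcomp Require Import all_boot.
From mathcomp Require Import fingroup perm zify.
From Coquelicot Require Import Coquelicot.
Local Open Scope R_scope.
Set Implicit Arguments.
Unset Strict Implicit.
Unset Printing Implicit Defensive.

Lemma exp_le_exp (u w : R) : u <= w -> exp u <= exp w.
Proof.
by case/Rle_lt_or_eq_dec => [/exp_increasing/Rlt_le | ->] //; apply: Rle_refl.
Qed.

Lemma exp_neg_le (y : R) : 0 <= y -> exp (- y) <= 1 - y + y ^ 2 / 2.
Proof.
move=> Hy; case: (Req_dec y 0) => [-> | Hy0].
  by rewrite Ropp_0 exp_0; lra.
set g := fun z => 1 - z + z ^ 2 / 2 - exp (- z).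
have Hg' : forall z, derivable_pt_lim g z (-1 + z + exp (- z)).
  by move=> z; apply is_derive_Reals; rewrite /g; auto_derive; [|field].
have [z [Hgz Hz]] := MVT_cor2 g (fun z => -1 + z + exp (- z)) 0 y
  ltac:(lra) (fun z _ => Hg' z).
have Hexp := exp_ineq1_le (- z).
have : 0 <= g y - g 0 by rewrite Hgz; apply: Rmult_le_pos; lra.
by rewrite /g Ropp_0 exp_0; lra.
Qed.

Lemma inv_sq_ge0 (r : R) : 0 <= / r ^ 2.
Proof. by rewrite -pow_inv; apply: pow2_ge_0. Qed.

Lemma INR_expn2 (e : nat) : INR (2 ^ e)%N = 2 ^ e.
Proof. by elim: e => [|e IH] //; rewrite expnS mult_INR IH. Qed.

Section RealSums.
Variable T : finType.
Implicit Types (P : pred T) (F G : T -> R).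

Lemma sumR_le P F G : (forall i, P i -> F i <= G i) ->
  \big[Rplus/0]_(i | P i) F i <= \big[Rplus/0]_(i | P i) G i.
Proof. by move=> H; apply: (big_ind2 (fun a b => a <= b)) => //; [lra | move=> *; lra]. Qed.

Lemma sumR_ge0 P F : (forall i, P i -> 0 <= F i) -> 0 <= \big[Rplus/0]_(i | P i) F i.
Proof. by move=> H; apply: (big_ind (fun a => 0 <= a)) => //; [lra | move=> *; lra]. Qed.

Lemma sumR_mull P F c :
  \big[Rplus/0]_(i | P i) (c * F i) = c * \big[Rplus/0]_(i | P i) F i.
Proof. by apply: (big_rec2 (fun a b => a = c * b)) => [|i y1 y2 _ ->]; ring. Qed.

Lemma INR_sum P (f : T -> nat) :
  INR (\sum_(i | P i) f i)%N = \big[Rplus/0]_(i | P i) INR (f i).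
Proof. by apply: (big_morph INR) => //; exact: plus_INR. Qed.

Lemma sumR_const P c : \big[Rplus/0]_(i | P i) c = INR #|P| * c.
Proof.
rewrite Rmult_comm -sum1_card INR_sum -sumR_mull.
by apply: eq_bigr => i _ /=; ring.
Qed.

(* Hoeffding's lemma for values in [0, c], with variance proxy c times the mean. *)
Lemma sum_exp_dev_le P (a : T -> R) c u M :
  (forall v, P v -> 0 <= a v <= c) -> 0 <= u ->
  INR #|P| * M = \big[Rplus/0]_(v | P v) a v ->
  \big[Rplus/0]_(v | P v) exp (u * (M - a v)) <= INR #|P| * exp (u ^ 2 * c * M / 2).
Proof.
move=> Ha Hu HM.
set K := - u + u ^ 2 * c / 2.
have HuM : 0 < exp (u * M) by apply: exp_pos.
apply: Rle_trans (_ : \big[Rplus/0]_(v | P v)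
  (exp (u * M) * 1 + exp (u * M) * K * a v) <= _).
  apply: sumR_le => v /Ha [Ha0 Hac].
  rewrite (_ : u * (M - a v) = u * M + - (u * a v)); last by ring.
  rewrite exp_plus.
  have := exp_neg_le (y := u * a v) ltac:(nra).
  have : 0 <= u ^ 2 * a v * (c - a v) by apply: Rmult_le_pos; nra.
  rewrite /K; nra.
rewrite big_split /= sumR_const sumR_mull -HM.
have -> : exp (u ^ 2 * c * M / 2) = exp (u * M) * exp (K * M).
  by rewrite -exp_plus /K; congr exp; field.
have HP := pos_INR #|P|; have := exp_ineq1_le (K * M).
have := Rmult_le_pos _ _ HP (Rlt_le _ _ HuM); nra.
Qed.

(* One step of the supermartingale: a uniform draw from r values of mean R / r <= x. *)
Lemma sum_exp_potential_le P a c x th r R W :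
  INR #|P| = r -> 2 <= r -> (forall v, P v -> 0 <= a v <= c) -> 0 <= c ->
  \big[Rplus/0]_(v | P v) a v = R -> R / r <= x -> 0 <= th ->
  \big[Rplus/0]_(v | P v) exp (- th * (x - (R - a v) / (r - 1)) + th ^ 2 * c * x / 2 * W)
  <= r * exp (- th * (x - R / r) + th ^ 2 * c * x / 2 * (/ (r - 1) ^ 2 + W)).
Proof.
move=> HP Hr Ha Hc HR Hx Hth.
set M := R / r; set u := th / (r - 1); set K := - th * (x - M) + th ^ 2 * c * x / 2 * W.
have Hu : 0 <= u by apply: Rdiv_le_0_compat; lra.
rewrite (eq_bigr (fun v => exp K * exp (u * (M - a v)))); last first.
  by move=> v _; rewrite -exp_plus /K /u /M; congr exp; field; lra.
rewrite sumR_mull.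
have HM : INR #|P| * M = \big[Rplus/0]_(v | P v) a v by rewrite HP HR /M; field; lra.
apply: Rle_trans (Rmult_le_compat_l _ _ _ (Rlt_le _ _ (exp_pos K)) (sum_exp_dev_le Ha Hu HM)) _.
rewrite HP Rmult_comm Rmult_assoc -exp_plus.
apply: Rmult_le_compat_l; first lra.
apply: exp_le_exp; rewrite /K /u.
have -> : (th / (r - 1)) ^ 2 = th ^ 2 * / (r - 1) ^ 2 by field; lra.
have : 0 <= th ^ 2 * / (r - 1) ^ 2 * c * (x - M).
  apply: Rmult_le_pos; last by rewrite /M; lra.
  by apply: Rmult_le_pos => //; apply: Rmult_le_pos; [nra | apply: inv_sq_ge0].
nra.
Qed.

End RealSums.

Fixpoint inv_sq_sum (r : R) (k : nat) : R :=
  if k is k'.+1 then / r ^ 2 + inv_sq_sum (r - 1) k' else 0.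

Lemma inv_sq_sum_ge0 r k : 0 <= inv_sq_sum r k.
Proof.
elim: k r => [|k IH] r; first exact: Rle_refl.
by have := inv_sq_ge0 r; have := IH (r - 1); rewrite /=; lra.
Qed.

Lemma inv_sq_sum_le r k : INR k + 1 <= r -> inv_sq_sum r k <= / (r - INR k) - / r.
Proof.
elim: k r => [|k IH] r Hr; first by rewrite /= Rminus_0_r; lra.
change (inv_sq_sum r k.+1) with (/ r ^ 2 + inv_sq_sum (r - 1) k).
rewrite S_INR in Hr *; have := IH (r - 1) ltac:(lra).
have Hr1 : 0 < r - 1 by have := pos_INR k; lra.
have -> : r - 1 - INR k = r - (INR k + 1) by ring.
have : / r ^ 2 <= / (r - 1) - / r.
  rewrite (_ : / (r - 1) - / r = / (r * (r - 1))); last by field; lra.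
  apply: Rinv_le_contravar; nra.
lra.
Qed.

Section PermutationPrefix.
Variable n : nat.
Implicit Types (p : seq 'I_n) (s : 'S_n).

Definition has_prefix p s : bool :=
  [forall i : 'I_n, (i < size p)%N ==> (s i == nth (s i) p i)].

Lemma has_prefixP p s (i : 'I_n) : has_prefix p s -> (i < size p)%N -> s i = nth (s i) p i.
Proof. by move=> /forallP /(_ i) /implyP H /H /eqP. Qed.

Lemma has_prefix_nil s : has_prefix [::] s.
Proof. exact/forallP. Qed.

Lemma has_prefix_rcons p v s (Hp : (size p < n)%N) :
  has_prefix (rcons p v) s = has_prefix p s && (s (Ordinal Hp) == v).
Proof.
apply/idP/andP => [H | [H /eqP Hv]].
- split; last first.
    have := has_prefixP H (i := Ordinal Hp); rewrite size_rcons ltnS leqnn => /(_ isT).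
    by rewrite nth_rcons /= ltnn eqxx => ->.
  apply/forallP => i; apply/implyP => Hi; apply/eqP.
  have := has_prefixP H (i := i); rewrite size_rcons ltnS (ltnW Hi) => /(_ isT).
  by rewrite nth_rcons Hi.
- apply/forallP => i; apply/implyP; rewrite size_rcons ltnS leq_eqVlt => /orP [/eqP Hi | Hi].
    have -> : i = Ordinal Hp by apply: val_inj.
    by rewrite nth_rcons /= ltnn eqxx Hv.
  by rewrite nth_rcons Hi; apply/eqP; apply: has_prefixP.
Qed.

Lemma mem_prefix p s v : has_prefix p s -> (size p <= n)%N ->
  (v \in p) = ((s^-1)%g v < size p)%N.
Proof.
move=> Hp Hs; apply/idP/idP => [Hv | Hi].
- have Hk : (index v p < size p)%N by rewrite index_mem.
  have Hkn : (index v p < n)%N by apply: leq_trans Hk Hs.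
  have := has_prefixP Hp (i := Ordinal Hkn) Hk.
  by rewrite (set_nth_default v) // nth_index // => <-; rewrite permK.
- by have := has_prefixP Hp Hi; rewrite permKV => ->; apply: mem_nth.
Qed.

Lemma has_prefix_notin p s (Hp : (size p < n)%N) : has_prefix p s -> s (Ordinal Hp) \notin p.
Proof. by move=> H; rewrite (mem_prefix _ H (ltnW Hp)) permK ltnn. Qed.

Lemma card_has_prefix_partition p (E : pred 'S_n) (Hp : (size p < n)%N) :
  #|[set s | has_prefix p s && E s]| =
  (\sum_(v : 'I_n | v \notin p) #|[set s | has_prefix (rcons p v) s && E s]|)%N.
Proof.
rewrite -sum1_card (partition_big (fun s => s (Ordinal Hp)) (fun v => v \notin p)).
  apply: eq_bigr => v Hv; rewrite -sum1_card; apply: eq_bigl => s.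
  by rewrite !inE has_prefix_rcons andbAC.
by move=> s; rewrite inE => /andP [H _]; apply: has_prefix_notin.
Qed.

Lemma card_notin p : uniq p -> #|[pred v : 'I_n | v \notin p]| = (n - size p)%N.
Proof.
move=> Hu; have := cardC (mem p); rewrite card_ord (card_uniqP Hu).
have -> : #|[predC p]| = #|[pred v : 'I_n | v \notin p]| by apply: eq_card.
by move=> E; rewrite -[X in (X - _)%N]E addKn.
Qed.

Lemma card_has_prefix_full p : uniq p -> size p = n -> #|[set s | has_prefix p s]| = 1%N.
Proof.
move=> Hu Hs.
have Hinj : injective (fun i : 'I_n => nth i p i).
  move=> i j /= Hij; apply: val_inj; apply/eqP.
  rewrite -(nth_uniq i _ _ Hu) ?Hs ?ltn_ord //.
  by rewrite Hij (set_nth_default i j) // Hs.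
rewrite (_ : [set s | has_prefix p s] = [set perm Hinj]) ?cards1 //.
apply/setP => s; rewrite !inE; apply/idP/eqP => [Hp | ->].
- apply/permP => i; rewrite permE (has_prefixP Hp) ?Hs //.
  by apply: set_nth_default; rewrite Hs.
- apply/forallP => i; apply/implyP => Hi; rewrite permE.
  by apply/eqP; apply: set_nth_default; rewrite Hs.
Qed.

Lemma card_has_prefix p : uniq p -> (size p <= n)%N -> #|[set s | has_prefix p s]| = (n - size p)`!.
Proof.
move Hk : (n - size p)%N => k; elim: k p Hk => [|k IH] p Hk Hu Hs.
  by rewrite card_has_prefix_full //; apply/eqP; rewrite eqn_leq Hs -subn_eq0 Hk.
have Hp : (size p < n)%N by rewrite -subn_gt0 Hk.
have := card_has_prefix_partition predT Hp.
rewrite (eq_bigr (fun _ => k`!)) => [|v Hv].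
  rewrite sum_nat_const card_notin // Hk factS.
  by under eq_finset do rewrite andbT.
under eq_finset do rewrite andbT.
by apply: IH; rewrite ?size_rcons ?rcons_uniq ?Hv ?Hu //; lia.
Qed.

End PermutationPrefix.

Lemma RltbP a b : reflect (a < b) (Rltb a b).
Proof. by rewrite /Rltb; case: Rlt_dec => H; constructor. Qed.

Section SuffixMeanDeviation.
Variable n : nat.
Variable a : 'I_n -> R.
Variables c x th : R.
Hypothesis Ha : forall v, 0 <= a v <= c.
Hypothesis Hc : 0 <= c.
Hypothesis Hx : 0 <= x.
Hypothesis Hth : 0 <= th.
Implicit Types (p : seq 'I_n) (s : 'S_n).

Definition unrevealed_sum p := \big[Rplus/0]_(v < n | v \notin p) a v.

Definition suffix_mean s (d : nat) :=
  \big[Rplus/0]_(v < n | (d <= (s^-1)%g v)%N) a v / (INR n - INR d).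

Definition unrevealed_mean p := unrevealed_sum p / (INR n - INR (size p)).

(* The exponential potential of a revealed prefix p with k reveals to go; it
   bounds the number of its completions on which the mean of the unrevealed
   values later exceeds x. *)
Definition potential p (k : nat) : R :=
  INR (n - size p)`! * exp (- th * (x - unrevealed_mean p)
    + th ^ 2 * c * x / 2 * inv_sq_sum (INR n - INR (size p) - 1) k).

Lemma suffix_mean_prefix p s : has_prefix p s -> (size p <= n)%N ->
  suffix_mean s (size p) = unrevealed_mean p.
Proof.
move=> Hp Hs; rewrite /suffix_mean /unrevealed_mean /unrevealed_sum; congr (_ / _).
by apply: eq_bigl => v; rewrite (mem_prefix v Hp Hs) leqNgt.
Qed.

Lemma unrevealed_sum_rcons p v : v \notin p ->
  unrevealed_sum (rcons p v) = unrevealed_sum p - a v.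
Proof.
move=> Hv; rewrite /unrevealed_sum [in RHS](bigD1 v) //=.
under eq_bigl => i do rewrite mem_rcons in_cons negb_or andbC.
by rewrite Rplus_comm Rplus_minus_r.
Qed.

Lemma fact_le_potential p k : x < unrevealed_mean p -> INR (n - size p)`! <= potential p k.
Proof.
move=> HM; rewrite /potential -[X in X <= _]Rmult_1_r.
apply: Rmult_le_compat_l; first exact: pos_INR.
apply: Rle_trans (exp_ineq1_le _).
have : 0 <= th ^ 2 * c * x / 2 * inv_sq_sum (INR n - INR (size p) - 1) k.
  apply: Rmult_le_pos; last exact: inv_sq_sum_ge0.
  by apply: Rmult_le_pos; [apply: Rmult_le_pos; [apply: Rmult_le_pos; nra|] | lra].
have : 0 <= th * (unrevealed_mean p - x) by apply: Rmult_le_pos; lra.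
lra.
Qed.

Lemma sum_potential_rcons_le p k : uniq p -> (size p + 2 <= n)%N ->
  unrevealed_mean p <= x ->
  \big[Rplus/0]_(v < n | v \notin p) potential (rcons p v) k <= potential p k.+1.
Proof.
move=> Hu Hs HM.
set r := INR n - INR (size p).
have Hr : INR (n - size p) = r by rewrite minus_INR //; apply/leP; lia.
have Hr2 : 2 <= r by rewrite -Hr (_ : 2 = INR 2) //; apply: le_INR; apply/leP; lia.
set f' := INR (n - size p).-1`!.
have Hfact : INR (n - size p)`! = r * f'.
  rewrite -Hr /f' -mult_INR; congr INR.
  by have -> : (n - size p)%N = (n - size p).-1.+1 by lia.
rewrite (eq_bigr (fun v => f' * exp (- th * (x - (unrevealed_sum p - a v) / (r - 1))
    + th ^ 2 * c * x / 2 * inv_sq_sum (r - 1 - 1) k))); last first.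
  move=> v Hv; rewrite /potential /unrevealed_mean size_rcons unrevealed_sum_rcons //.
  have -> : INR n - INR (size p).+1 = r - 1 by rewrite S_INR /r; ring.
  by congr (INR _`! * _); lia.
rewrite sumR_mull /potential /unrevealed_mean Hfact -/r (Rmult_comm r).
rewrite [f' * r * _]Rmult_assoc.
apply: Rmult_le_compat_l; first exact: pos_INR.
by apply: sum_exp_potential_le => //; rewrite card_notin.
Qed.

Variable D : nat.
Hypothesis HD : (D + 2 <= n)%N.

Definition exceeds_from s (j : nat) : bool :=
  [exists d : 'I_n, ((j <= d) && (d <= D))%N && Rltb x (suffix_mean s d)].

Lemma exceeds_from_next p s : has_prefix p s -> (size p <= n)%N ->
  unrevealed_mean p <= x -> exceeds_from s (size p) = exceeds_from s (size p).+1.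
Proof.
move=> Hp Hs HM; apply/existsP/existsP => -[d /andP [/andP [H1 H2] Hb]]; exists d.
  rewrite H2 Hb ltn_neqAle H1 !andbT; apply/eqP => Hd.
  by move/RltbP: Hb; rewrite -Hd suffix_mean_prefix //; lra.
by rewrite H2 Hb (ltnW H1).
Qed.

Lemma card_stopped_le_potential p k (E : pred 'S_n) : uniq p -> (size p <= n)%N ->
  x < unrevealed_mean p -> INR #|[set s | has_prefix p s && E s]| <= potential p k.
Proof.
move=> Hu Hs HM; apply: Rle_trans (fact_le_potential k HM).
rewrite -card_has_prefix //; apply: le_INR; apply/leP; apply: subset_leq_card.
by apply/subsetP => s; rewrite !inE => /andP [].
Qed.

Lemma card_exceeds_le_potential k p : uniq p -> (size p + k)%N = D ->
  INR #|[set s | has_prefix p s && exceeds_from s (size p)]| <= potential p k.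
Proof.
elim: k p => [|k IH] p Hu Hk; have Hsn : (size p <= n)%N by lia.
all: have [HM | HM] := Rlt_le_dec x (unrevealed_mean p);
  first exact: card_stopped_le_potential.
- rewrite (_ : [set s | _] = set0) ?cards0; last first.
    apply/setP => s; rewrite !inE; apply/negbTE/andP => -[Hp].
    rewrite (exceeds_from_next Hp Hsn HM) addn0 in Hk *.
    by case/existsP => d /andP [/andP [H1 H2] _]; move: H1 H2; rewrite Hk; lia.
  by apply: Rmult_le_pos; [apply: pos_INR | apply: Rlt_le; apply: exp_pos].
- have Hp : (size p < n)%N by lia.
  rewrite (_ : [set s | _] = [set s | has_prefix p s && exceeds_from s (size p).+1]).
    rewrite card_has_prefix_partition // INR_sum.
    apply: Rle_trans (sum_potential_rcons_le k Hu _ HM); last lia.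
    apply: sumR_le => v Hv; have := IH (rcons p v); rewrite size_rcons.
    by apply; rewrite ?rcons_uniq ?Hv ?Hu //; lia.
  apply/setP => s; rewrite !inE; case Hps: (has_prefix p s) => //=.
  exact: exceeds_from_next.
Qed.

Lemma card_exceeds_le :
  INR #|[set s | exceeds_from s 0]| <=
  INR n`! * exp (- th * (x - \big[Rplus/0]_(v < n) a v / INR n)
                 + th ^ 2 * c * x / 2 * inv_sq_sum (INR n - 1) D).
Proof.
have := card_exceeds_le_potential (p := [::]) isT (add0n D).
rewrite /potential /unrevealed_mean /unrevealed_sum /= subn0 Rminus_0_r.
by under eq_finset do rewrite has_prefix_nil.
Qed.

End SuffixMeanDeviation.

Lemma card_le_sum_of_cover (T J : finType) (A : pred T) (B : J -> pred T) :
  (forall x, A x -> exists j, B j x) -> (#|A| <= \sum_(j : J) #|B j|)%N.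
Proof.
move=> H; rewrite -sum1_card.
apply: leq_trans (_ : \sum_(x in A) \sum_(j : J) (B j x : nat) <= _)%N.
  by apply: leq_sum => x Hx; have [j Hj] := H x Hx; rewrite (bigD1 j) //= Hj.
apply: leq_trans (_ : \sum_(x : T) \sum_(j : J) (B j x : nat) <= _)%N.
  by rewrite [X in (_ <= X)%N](bigID (mem A)) leq_addr.
rewrite exchange_big; apply: leq_sum => j _.
rewrite -sum1_card [X in (_ <= X)%N]big_mkcond; apply: leq_sum => x _.
by rewrite unfold_in; case: (B j x).
Qed.

(* [th] minimises the right-hand side of the quadratic bound in [th]. *)
Lemma tilted_exponent_le (mu0 mu d c Q W x th : R) :
  0 <= d -> 0 < c -> 0 < mu0 -> 0 < Q -> mu <= mu0 -> 0 <= W <= / Q ->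
  x = mu0 + d -> th = d * Q / (c * x) ->
  - th * (x - mu) + th ^ 2 * c * x / 2 * W <= - (d * d * Q / (2 * c * x)).
Proof.
move=> Hd Hc Hmu0 HQ Hmu [HW0 HW1] Hx Hth.
have Hx0 : 0 < x by lra.
have Hth0 : 0 <= th by rewrite Hth; apply: Rdiv_le_0_compat; nra.
have S1 : 0 <= th ^ 2 * c * x / 2.
  by have := pow2_ge_0 th; have := Rmult_le_pos _ _ (pow2_ge_0 th) (Rlt_le _ _ Hc); nra.
have S2 := Rmult_le_compat_l _ _ _ S1 HW1.
have E : - th * d + th ^ 2 * c * x / 2 * / Q = - (d * d * Q / (2 * c * x)).
  by rewrite Hth; field; lra.
have : th * (x - mu) >= th * d by rewrite Hx; nra.
lra.
Qed.

Lemma tilted_rate_ge (B n' eps gam w s P Q : R) :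
  0 < B -> 0 < n' -> 0 < eps <= / 2 -> 0 < gam -> 0 < w -> 0 <= s ->
  s * s = eps -> 1 <= P -> w * w * (2 * P) = 1 -> Q = n' * eps * P ->
  let d := B / n' * w * s in
  eps ^ 2 / (6 * gam) <= d * d * Q / (2 * (gam * B) * (B / n' + d)).
Proof.
move=> HB Hn He Hg Hw Hs Hss HP Hwp HQ d.
have Hww : w * w = / (2 * P) by apply: (Rmult_eq_reg_r (2 * P)); [rewrite Rinv_l; lra | lra].
have Hws : 0 <= w * s by apply: Rmult_le_pos; lra.
have Hws2 : w * s <= / 2.
  have : (w * s) * (w * s) <= / 2 * / 2.
    rewrite (_ : (w * s) * (w * s) = (w * w) * (s * s)); last by ring.
    rewrite Hss Hww Rmult_comm.
    apply: Rmult_le_compat; [lra | apply: Rlt_le; apply: Rinv_0_lt_compat; lra | lra |].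
    by apply: Rinv_le_contravar; lra.
  nra.
have -> : d * d * Q / (2 * (gam * B) * (B / n' + d)) = eps ^ 2 / (4 * gam * (1 + w * s)).
  rewrite /d HQ (_ : B / n' + B / n' * w * s = B / n' * (1 + w * s)); last by ring.
  rewrite (_ : B / n' * w * s * (B / n' * w * s) * (n' * eps * P) =
               (B / n') * (B / n') * n' * eps * P * (w * w) * (s * s)); last by ring.
  by rewrite Hss Hww; field; repeat split; lra.
apply: Rmult_le_compat_l; first nra.
by apply: Rinv_le_contravar; nra.
Qed.

Lemma floor_log2_spec (y : R) (L : nat) : 1 <= y < 2 ^ L ->
  exists k, (k < L)%N /\ Int_part (ln y / ln 2) = Z.of_nat k /\ 2 ^ k <= y.
Proof.
move=> [Hy1 HyL].
have Hl2 := ln_lt_2.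
have Hlny : 0 <= ln y by rewrite -ln_1; apply: ln_le; lra.
have HlnyL : ln y < INR L * ln 2 by rewrite -ln_pow; [apply: ln_increasing | ]; lra.
set z := ln y / ln 2.
have Hz0 : 0 <= z by apply: Rmult_le_pos; [lra | apply: Rlt_le; apply: Rinv_0_lt_compat; lra].
have HzL : z < INR L.
  by apply: (Rmult_lt_reg_r (ln 2)); [lra | rewrite /z /Rdiv Rmult_assoc Rinv_l; lra].
have [HI1 HI2] := base_Int_part z.
have HI0 : (-1 < Int_part z)%Z by apply: lt_IZR; rewrite /=; lra.
have HIL : (Int_part z < Z.of_nat L)%Z by apply: lt_IZR; rewrite -INR_IZR_INZ; lra.
exists (Z.to_nat (Int_part z)); split; [apply/ltP; lia | split; first lia].
have Hk : INR (Z.to_nat (Int_part z)) = IZR (Int_part z) by rewrite INR_IZR_INZ; congr IZR; lia.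
rewrite -Rpower_pow ?Hk /Rpower; last lra.
rewrite -[y in _ <= y](exp_ln y); last lra.
apply: exp_le_exp; apply: (Rmult_le_reg_r (/ ln 2)); first by apply: Rinv_0_lt_compat; lra.
by rewrite Rmult_assoc Rinv_r; [rewrite Rmult_1_r | lra].
Qed.

Lemma kappa_spec n N L t eps : (0 < N)%N -> n = (N * 2 ^ L)%N -> INR n * eps = INR N ->
  (0 < t)%N -> (t + N <= n)%N ->
  exists k, (k < L)%N /\ kappa n t eps = Z.of_nat k.+1 /\ (N * 2 ^ k + t <= n)%N.
Proof.
move=> HN0 Hn HN Ht0 Ht.
have HNr : 0 < INR N by apply: lt_0_INR; apply/ltP.
have Hnr : INR n = INR N * 2 ^ L by rewrite Hn mult_INR INR_expn2.
have Htn : INR t + INR N <= INR n by rewrite -plus_INR; apply: le_INR; apply/leP.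
have Ht0r : 0 < INR t by apply: lt_0_INR; apply/ltP.
have Hy : (INR n - INR t) / (INR n * eps) = (INR n - INR t) / INR N by rewrite HN.
have [Hy1 HyL] : 1 <= (INR n - INR t) / INR N < 2 ^ L.
  split; [apply: (Rmult_le_reg_r (INR N)) | apply: (Rmult_lt_reg_r (INR N))] => //;
    rewrite /Rdiv Rmult_assoc Rinv_l; nra.
have [k [HkL [Hfloor Hk]]] := floor_log2_spec (conj Hy1 HyL).
exists k; split=> //; split; first by rewrite /kappa Hy Hfloor; lia.
apply/leP; apply: INR_le; rewrite plus_INR mult_INR INR_expn2.
have := Rmult_le_compat_l _ _ _ (Rlt_le _ _ HNr) Hk.
by rewrite /Rdiv (Rmult_comm (INR n - _)) -Rmult_assoc Rinv_r; lra.
Qed.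

Section DyadicScales.
Variables (n m k N L : nat) (A : 'I_n -> 'I_m -> 'I_k -> R) (xs : 'I_n -> vec k).
Variables (b : vec m) (eps gamma : R).
Hypothesis Hn : (0 < n)%N.
Hypothesis Hb : forall i, 0 < b i.
Hypothesis Hgamma : 0 < gamma.
Hypothesis Heps : 0 < eps < 1.
Hypothesis HL : / eps = 2 ^ L.
Hypothesis HN : INR n * eps = INR N.

Definition load i v := mxv (A v) (xs v) i.

Hypothesis Hload : forall i v, 0 <= load i v <= gamma * b i.
Hypothesis Hfeas : forall i, \big[Rplus/0]_(v < n) load i v <= b i.

Lemma INR_n_gt0 : 0 < INR n.
Proof. by apply: lt_0_INR; apply/ltP. Qed.

Lemma N_gt0 : (0 < N)%N.
Proof.
have : 0 < INR N by rewrite -HN; have := INR_n_gt0; nra.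
by case: (N) => //=; lra.
Qed.

Lemma eps_pow2 : eps = / 2 ^ L.
Proof. by rewrite -HL Rinv_inv. Qed.

Lemma n_eq_N_pow2 : n = (N * 2 ^ L)%N.
Proof.
have H2L := pow_lt 2 L ltac:(lra).
by apply: INR_eq; rewrite mult_INR INR_expn2 -HN eps_pow2; field; lra.
Qed.

Lemma eps_le_half : eps <= / 2.
Proof.
rewrite eps_pow2; apply: Rinv_le_contravar; first lra.
case: L eps_pow2 => [|L'] /=; first by lra.
by have := pow_R1_Rle 2 L' ltac:(lra); lra.
Qed.

(* [scale_dev j] is the factor [2 ^ (- kappa / 2)] of the statement at [kappa = j + 1]. *)
Definition scale_dev (j : nat) := Rpower 2 (- IZR (Z.of_nat j.+1) / 2).
Definition scale_threshold i j := b i / INR n + b i / INR n * scale_dev j * sqrt eps.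
Definition scale_horizon j := (n - N * 2 ^ j - 1)%N.
Definition scale_event (ij : 'I_m * 'I_L) (s : 'S_n) : bool :=
  exceeds_from (load ij.1) (scale_threshold ij.1 ij.2) (scale_horizon ij.2) s 0.

Lemma scale_dev_sq j : scale_dev j * scale_dev j * (2 * 2 ^ j) = 1.
Proof.
rewrite /scale_dev -Rpower_plus.
have -> : - IZR (Z.of_nat j.+1) / 2 + - IZR (Z.of_nat j.+1) / 2 = - INR j.+1
  by rewrite INR_IZR_INZ; field.
rewrite Rpower_Ropp Rpower_pow /=; last lra.
by have H2j := pow_lt 2 j ltac:(lra); field; lra.
Qed.

Lemma Rti_suffix_mean s t i : Rti A xs b s t.+1 i = suffix_mean (load i) s t - b i / INR n.
Proof.
rewrite /Rti /suffix_mean; congr (_ - _); rewrite /Rdiv [RHS]Rmult_comm; congr (_ * _).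
  by rewrite S_INR; congr Rinv; ring.
rewrite [RHS](reindex_inj (@perm_inj _ s)).
by apply: eq_bigl => v /=; rewrite permK ltnS.
Qed.

Lemma bad_event_cover s : bad_event N A xs b eps s -> exists ij, scale_event ij s.
Proof.
case/existsP => t /andP [Ht /existsP [i /RltbP Hi]].
have [j [Hj [Hkappa Htn]]] :=
  kappa_spec N_gt0 n_eq_N_pow2 HN (ltn0Sn t) ltac:(move: Ht; lia).
exists (i, Ordinal Hj); apply/existsP; exists t; apply/andP; split.
  by rewrite leq0n /scale_horizon /=; move: Htn; lia.
apply/RltbP; move: Hi; rewrite Hkappa Rti_suffix_mean /scale_threshold /scale_dev /=; lra.
Qed.

Lemma scale_horizon_spec (j : 'I_L) :
  (0 < N * 2 ^ j)%N /\ (scale_horizon j + N * 2 ^ j + 1)%N = n.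
Proof.
have HNj : (0 < N * 2 ^ j)%N by rewrite muln_gt0 N_gt0 expn_gt0.
have : (N * 2 ^ j * 2 <= n)%N.
  by rewrite n_eq_N_pow2 -mulnA leq_mul2l -expnSr leq_pexp2l // orbT.
by rewrite /scale_horizon; split => //; lia.
Qed.

Lemma inv_sq_sum_horizon_le (j : 'I_L) :
  inv_sq_sum (INR n - 1) (scale_horizon j) <= / INR (N * 2 ^ j).
Proof.
have [HNj /(congr1 INR)] := scale_horizon_spec j.
rewrite !plus_INR /= => Hhor.
have HQ : 1 <= INR (N * 2 ^ j) by apply: (le_INR 1); apply/leP.
have Hh := pos_INR (scale_horizon j).
have Hr : INR (scale_horizon j) + 1 <= INR n - 1 by lra.
apply: Rle_trans (inv_sq_sum_le Hr) _.
have : 0 < / (INR n - 1) by apply: Rinv_0_lt_compat; lra.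
by rewrite (_ : INR n - 1 - INR (scale_horizon j) = INR (N * 2 ^ j)); lra.
Qed.

Lemma card_scale_event_le ij :
  INR #|[set s | scale_event ij s]| <= INR n`! * exp (- (eps ^ 2) / (6 * gamma)).
Proof.
case: ij => i j; rewrite /scale_event [(_, _).1]/= [(_, _).2]/=.
have Hn0 := INR_n_gt0; have Hbi := Hb i; have [HNj Hhor] := scale_horizon_spec j.
set Q := INR (N * 2 ^ j).
set c := gamma * b i.
set d := b i / INR n * scale_dev j * sqrt eps.
set x := scale_threshold i j.
set th := d * Q / (c * x).
have HQ : Q = INR n * eps * 2 ^ j by rewrite /Q mult_INR INR_expn2 -HN.
have HQ1 : 1 <= Q by apply: (le_INR 1); apply/leP.
have Hw : 0 < scale_dev j by apply: exp_pos.
have Hd : 0 <= d.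
  apply: Rmult_le_pos; last exact: sqrt_pos.
  by apply: Rmult_le_pos; [apply: Rdiv_le_0_compat|]; lra.
have Hmu0 : 0 < b i / INR n by apply: Rdiv_lt_0_compat.
have Hx : x = b i / INR n + d by [].
have Hc : 0 < c by rewrite /c; nra.
have Hth : 0 <= th by apply: Rdiv_le_0_compat; nra.
apply: Rle_trans (card_exceeds_le (Hload i) (Rlt_le _ _ Hc) _ Hth _) _.
- by rewrite Hx; lra.
- by move: Hhor HNj; lia.
apply: Rmult_le_compat_l; first exact: pos_INR.
apply: exp_le_exp.
have HW : 0 <= inv_sq_sum (INR n - 1) (scale_horizon j) <= / Q.
  exact: conj (inv_sq_sum_ge0 _ _) (inv_sq_sum_horizon_le j).
have Hmu : \big[Rplus/0]_(v < n) load i v / INR n <= b i / INR n.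
  by apply: Rmult_le_compat_r; [apply: Rlt_le; apply: Rinv_0_lt_compat | apply: Hfeas].
apply: Rle_trans (tilted_exponent_le Hd Hc Hmu0 _ Hmu HW Hx erefl) _; first lra.
rewrite /Rdiv Ropp_mult_distr_l_reverse; apply: Ropp_le_contravar.
exact: (tilted_rate_ge Hbi Hn0 (conj (proj1 Heps) eps_le_half) Hgamma Hw (sqrt_pos eps)
  (sqrt_sqrt _ (Rlt_le _ _ (proj1 Heps))) (pow_R1_Rle 2 j ltac:(lra)) (scale_dev_sq j) HQ).
Qed.

Lemma prob_bad_event_le :
  prob_perm (bad_event N A xs b eps) <= INR m * INR L * exp (- (eps ^ 2) / (6 * gamma)).
Proof.
have Hfact : 0 < INR n`! by apply: lt_0_INR; apply/ltP; apply: fact_gt0.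
rewrite /prob_perm cardsT card_Sn; apply: (Rmult_le_reg_r (INR n`!)) => //.
rewrite /Rdiv Rmult_assoc Rinv_l ?Rmult_1_r; last lra.
apply: Rle_trans (_ : INR (\sum_(ij : 'I_m * 'I_L) #|[set s | scale_event ij s]|) <= _).
  apply: le_INR; apply/leP; rewrite cardsE.
  apply: card_le_sum_of_cover => s Hs; have [ij Hij] := bad_event_cover Hs.
  by exists ij; change (s \in [set s0 | scale_event ij s0]); rewrite inE.
rewrite INR_sum; apply: Rle_trans (sumR_le (fun ij _ => card_scale_event_le ij)) _.
rewrite sumR_const.
have -> : #|(fun _ : 'I_m * 'I_L => true)| = (m * L)%N
  by rewrite -[in RHS](card_ord m) -[in RHS](card_ord L) -card_prod.
by rewrite mult_INR; apply: Req_le; rewrite /Rdiv; ring.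
Qed.

End DyadicScales.

Lemma mxv_ge0 m k (A : 'I_m -> 'I_k -> R) (x : vec k) i :
  (forall i j, 0 <= A i j) -> (forall j, 0 <= x j) -> 0 <= mxv A x i.
Proof. by move=> HA Hx; apply: sumR_ge0 => j _; apply: Rmult_le_pos. Qed.

Lemma supergradient_value_ge0 k (f : efun k) (x g : vec k) (v : R) :
  f (fun _ => 0) = Some 0 -> (forall j, 0 <= g j) -> (forall j, 0 <= x j) ->
  (forall y w, f y = Some w -> w <= v + \big[Rplus/0]_(j < k) (g j * (y j - x j))) ->
  0 <= v.
Proof.
move=> Hf0 Hg Hx Hsg; have := Hsg _ _ Hf0.
have : \big[Rplus/0]_(j < k) (g j * (0 - x j)) <= \big[Rplus/0]_(j < k) 0.
  by apply: sumR_le => j _; have := Hg j; have := Hx j; nra.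
by rewrite sumR_const; lra.
Qed.

Theorem mainTheorem6
  (m k n : nat) (Hm : (0 < m)%N) (Hk : (0 < k)%N) (Hn : (0 < n)%N)
  (b : vec m) (Hb : forall i, (0 < b i))
  (f : 'I_n -> efun k) (Hf : forall t, in_G (f t))
  (A : 'I_n -> 'I_m -> 'I_k -> R) (HA : forall t i j, (0 <= A t i j))
  (Pstar : R)
  (HPstar : is_lub
     (fun r => exists (x : 'I_n -> vec k) (v : 'I_n -> R),
        (forall i, (\big[Rplus/0]_(t < n) mxv (A t) (x t) i <= b i)) /\
        (forall t, f t (x t) = Some (v t)) /\
        r = \big[Rplus/0]_(t < n) v t) Pstar)
  (HPpos : (0 < Pstar))
  (gamma : R) (Hgamma : (0 < gamma))
  (Hgam1 : forall t (x : vec k) (v : R), f t x = Some v -> (0 <= v) ->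
             forall i, (mxv (A t) x i / b i <= gamma))
  (Hgam2 : forall t (x : vec k) (v : R), f t x = Some v -> (v <= gamma * Pstar))
  (eps : R) (Heps : (0 < eps < 1))
  (L N : nat) (HL : (/ eps = 2 ^ L)) (HN : (INR n * eps = INR N))
  (xs : 'I_n -> vec k) (vs : 'I_n -> R)
  (Hxs_feas : forall i, (\big[Rplus/0]_(t < n) mxv (A t) (xs t) i <= b i))
  (Hxs_val : forall t, f t (xs t) = Some (vs t))
  (Hxs_opt : \big[Rplus/0]_(t < n) vs t = Pstar)
  (ys : vec m) (Hys_nonneg : forall i, (0 <= ys i))
  (Hys_cs : forall i, (\big[Rplus/0]_(t < n) mxv (A t) (xs t) i < b i) ->
              ys i = 0)
  (Hys_sg : forall t (x : vec k) (v : R), f t x = Some v ->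
     (v <= vs t + \big[Rplus/0]_(j < k)
                    ((\big[Rplus/0]_(i < m) (A t i j * ys i)) * (x j - xs t j)))) :
  (prob_perm (bad_event N A xs b eps)
     <= INR m * INR L * exp (- (eps ^ 2) / (6 * gamma))).
Proof.
have Hxs0 t j : 0 <= xs t j.
  by case: (Hf t) => _ [_ [_ [_ [Hdom _]]]]; apply: Hdom; rewrite Hxs_val.
have Hvs0 t : 0 <= vs t.
  case: (Hf t) => _ [_ [_ [_ [_ Hf0]]]].
  apply: (supergradient_value_ge0 Hf0 _ (Hxs0 t) (Hys_sg t)) => j.
  by apply: sumR_ge0 => i _; apply: Rmult_le_pos.
apply: prob_bad_event_le => // i t; split; first exact: mxv_ge0.
by rewrite -Rle_div_l; [exact: (Hgam1 _ _ _ (Hxs_val t) (Hvs0 t) i) | apply: Hb].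
Qed.
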